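(* Let $\Bbbk$ be any (commutative unital) ring, let $r\ge1$ and $d>r+1$ be integers, and let $\alpha(d,r)=(d-r,1^r)$. For every partition $\lambda$ of $d$ with $\lambda\trianglerighteq\alpha(d,r)$ there is an embedding $M^\lambda\subseteq M^{\alpha(d,r)}$ of left $\Bbbk W_d$-modules.
   Context: $W_d$ is the symmetric group on $\{1,\dots,d\}$; for a partition (or weak composition) $\lambda$ of $d$, $W_\lambda$ is the Young subgroup stabilising the rows of the tableau obtained by writing $1,\dots,d$ left to right along the rows of the Young diagram of $\lambda$, and $M^\lambda=\Bbbk W_d\otimes_{\Bbbk W_\lambda}\Bbbk$ is the permutation module. $\trianglerighteq$ is the dominance order on partitions. *)

From HB Require Import structures.
From mathcomp Require Import all_boot all_order all_algebra all_fingroup.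
Set Implicit Arguments. Unset Strict Implicit. Unset Printing Implicit Defensive.
Import GRing.Theory.

(* W_d is 'S_d = {perm 'I_d} (positions 0..d-1 instead of 1..d). *)

Definition is_partition (d : nat) (lam : seq nat) : Prop :=
  [/\ sorted geq lam, all (fun p => 0 < p) lam & sumn lam = d].

Definition dominates (lam mu : seq nat) : Prop :=
  forall i : nat, \sum_(j < i) nth 0 mu j <= \sum_(j < i) nth 0 lam j.

Definition alpha (d r : nat) : seq nat := (d - r) :: nseq r 1.

(* Row (0-indexed) of the tableau of shape lam containing position i,
   when 0..d-1 are written left to right along the rows. *)
Definition rowof (lam : seq nat) (i : nat) : nat :=
  count (fun j => \sum_(k < j.+1) nth 0 lam k <= i) (iota 0 (size lam)).

Definition young (d : nat) (lam : seq nat) : {set 'S_d} :=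
  [set s : 'S_d | [forall i : 'I_d, rowof lam (s i) == rowof lam i]].

(* Permutation module M^lam = k W_d ⊗_{k W_lam} k, realised as the free
   k-module on the left cosets x W_lam, i.e. as the functions W_d -> k that are
   constant on left cosets of W_lam, with W_d acting by left translation. *)
Definition inM (k : comPzRingType) (d : nat) (lam : seq nat)
  (f : {ffun 'S_d -> k}) : Prop :=
  forall (x h : 'S_d), h \in young d lam -> f (x * h)%g = f x.

Definition actM (k : comPzRingType) (d : nat) (g : 'S_d)
  (f : {ffun 'S_d -> k}) : {ffun 'S_d -> k} :=
  [ffun x => f (g^-1 * x)%g].

Definition addM (k : comPzRingType) (d : nat) (f1 f2 : {ffun 'S_d -> k})
  : {ffun 'S_d -> k} := [ffun x => (f1 x + f2 x)%R].

Definition scaleM (k : comPzRingType) (d : nat) (a : k) (f : {ffun 'S_d -> k})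
  : {ffun 'S_d -> k} := [ffun x => (a * f x)%R].

Definition is_embedding (k : comPzRingType) (d : nat) (lam mu : seq nat)
  (phi : {ffun 'S_d -> k} -> {ffun 'S_d -> k}) : Prop :=
  [/\ (forall f, inM lam f -> inM mu (phi f)),
      (forall f1 f2, inM lam f1 -> inM lam f2 ->
          phi (addM f1 f2) = addM (phi f1) (phi f2)),
      (forall a f, inM lam f -> phi (scaleM a f) = scaleM a (phi f)),
      (forall g f, inM lam f -> phi (actM g f) = actM g (phi f))
    & (forall f1 f2, inM lam f1 -> inM lam f2 -> phi f1 = phi f2 -> f1 = f2)].

From mathcomp Require Import all_boot all_order all_algebra all_fingroup.
From mathcomp Require Import zify.

(* Dominance over alpha(d,r) only forces lam_1 >= d - r. Then the first row of
   lam contains the first row of alpha(d,r), whose other rows are singletons,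
   so W_alpha(d,r) <= W_lam. A function constant on left cosets of W_lam is then
   constant on left cosets of W_alpha(d,r): the inclusion M^lam ⊆ M^alpha(d,r)
   is the embedding. *)

Section YoungSubgroups.

Variable d : nat.

Lemma young_subset (lam mu : seq nat) :
  (forall i j : 'I_d, rowof mu i = rowof mu j -> rowof lam i = rowof lam j) ->
  young d mu \subset young d lam.
Proof.
move=> row_refine; apply/subsetP => h; rewrite !inE => /forallP h_mu.
by apply/forallP => i; apply/eqP/row_refine/eqP.
Qed.

Lemma inM_subset (k : comPzRingType) (lam mu : seq nat) (f : {ffun 'S_d -> k}) :
  young d mu \subset young d lam -> inM lam f -> inM mu f.
Proof. by move=> /subsetP sub_mu_lam f_lam x h /sub_mu_lam; apply: f_lam. Qed.

Lemma inclusion_embedding (k : comPzRingType) (lam mu : seq nat) :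
  young d mu \subset young d lam ->
  is_embedding lam mu (id : {ffun 'S_d -> k} -> {ffun 'S_d -> k}).
Proof. by move=> sub_mu_lam; split=> // f; apply: inM_subset. Qed.

End YoungSubgroups.

Lemma count_iota_lt (m n : nat) : count (fun j => j < m) (iota 0 n) = minn m n.
Proof.
elim: n => [|n IHn]; first by rewrite minn0.
rewrite -addn1 iotaD count_cat IHn /= add0n addn0.
case: ltnP => n_m; lia.
Qed.

Lemma rowof_lt_head (lam : seq nat) (i : nat) : i < nth 0 lam 0 -> rowof lam i = 0.
Proof.
move=> i_lt; apply/eqP; rewrite -leqn0 leqNgt -has_count.
apply/hasPn => j _ /=; rewrite -ltnNge big_ord_recl /=.
exact: leq_trans i_lt (leq_addr _ _).
Qed.

Lemma sum_hook_prefix (m r j : nat) : j <= r ->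
  \sum_(k < j.+1) nth 0 (m :: nseq r 1) k = m + j.
Proof.
elim: j => [|j IHj] j_le; first by rewrite big_ord1 addn0.
rewrite big_ord_recr /= IHj ?nth_nseq; last exact: ltnW.
by rewrite j_le addn1 addnS.
Qed.

Lemma rowof_hook (m r i : nat) : rowof (m :: nseq r 1) i = minn (i.+1 - m) r.+1.
Proof.
rewrite /rowof [size _]/= size_nseq -count_iota_lt.
apply: eq_in_count => j; rewrite mem_iota add0n => /andP [_ j_lt].
rewrite sum_hook_prefix //=; lia.
Qed.

Lemma young_alpha_subset (d r : nat) (lam : seq nat) :
  d - r <= nth 0 lam 0 -> young d (alpha d r) \subset young d lam.
Proof.
move=> head_ge; apply: young_subset => i j; rewrite !rowof_hook.
have := ltn_ord i; have := ltn_ord j.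
case: (ltnP i (d - r)) => [i_lt | i_ge] j_lt_d i_lt_d same_row.
  have j_lt : j < d - r by lia.
  by rewrite !rowof_lt_head //; apply: leq_trans head_ge.
by have -> : i = j :> nat by lia.
Qed.

Lemma dominates_head (lam mu : seq nat) :
  dominates lam mu -> nth 0 mu 0 <= nth 0 lam 0.
Proof. by move=> /(_ 1); rewrite !big_ord1. Qed.

Theorem proposition7p4 (k : comPzRingType) (d r : nat) (lam : seq nat) :
  (1 <= r)%N -> (r.+1 < d)%N ->
  is_partition d lam -> dominates lam (alpha d r) ->
  exists phi : {ffun 'S_d -> k} -> {ffun 'S_d -> k},
    is_embedding lam (alpha d r) phi.
Proof.
move=> _ _ _ /dominates_head head_ge.
exists id; apply: inclusion_embedding.
exact: young_alpha_subset.
Qed.
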